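(* There exist symmetric matrices $C,A_1,\dots,A_m\in\mathbb{S}^n$, $b\in\mathbb{R}^m$ and a nonzero $S\in\mathbb{S}^n_+$ with $C\cdot S=0$ and $A_i\cdot S=0$ for all $i$ such that: the pair (P-SDP): maximize $b^Ty$ s.t. $C-\sum_iy_iA_i\in\mathbb{S}^n_+$, and (D-SDP): minimize $C\cdot X$ s.t. $A_i\cdot X=b_i$, $X\in\mathbb{S}^n_+$, both attain their optimal values and these values are equal; the reduced pair (R/P): maximize $b^Ty$ s.t. $C-\sum_iy_iA_i\in\mathcal{F}$, and (R/D): minimize $C\cdot X$ s.t. $A_i\cdot X=b_i$, $X\in\mathcal{F}^*$, where $\mathcal{F}=\mathbb{S}^n_+\cap S^{\perp}$, both attain their optimal values and these values are equal; and yet there is an optimal solution $X$ of (R/D) for which no $\alpha\in\mathbb{R}$ satisfies $X+\alpha S\in\mathbb{S}^n_+$ (so the dual recovery procedure fails on $X$).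
   Context: $\mathbb{S}^n$ denotes real symmetric $n\times n$ matrices with trace inner product $A\cdot B=\operatorname{trace}(AB)$, $\mathbb{S}^n_+$ the positive semidefinite cone, $S^{\perp}=\{X:S\cdot X=0\}$, and $\mathcal{F}^*=\{Y\in\mathbb{S}^n: Y\cdot X\ge0\ \forall X\in\mathcal{F}\}$. The dual recovery procedure (for one reducing certificate $S$) takes an optimal solution $X$ of (R/D) and seeks $\alpha$ with $X+\alpha S\in\mathbb{S}^n_+$, failing if none exists. *)

From HB Require Import structures.
From mathcomp Require Import all_boot all_order all_algebra.
Set Implicit Arguments. Unset Strict Implicit. Unset Printing Implicit Defensive.
Import Order.TTheory GRing.Theory Num.Theory.
Local Open Scope ring_scope.

Section SDP.
Variables (R : rcfType) (n m : nat).

Definition symm (X : 'M[R]_n) : Prop := X^T = X.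

Definition psd (X : 'M[R]_n) : Prop :=
  symm X /\ forall x : 'cV[R]_n, 0 <= (x^T *m X *m x) 0 0.

Definition dotm (A B : 'M[R]_n) : R := \tr (A *m B).

Definition faceF (S X : 'M[R]_n) : Prop := psd X /\ dotm S X = 0.

Definition dualF (S Y : 'M[R]_n) : Prop :=
  symm Y /\ forall X, faceF S X -> 0 <= dotm Y X.

Definition bty (b y : 'I_m -> R) : R := \sum_(i < m) b i * y i.

Definition slack (C : 'M[R]_n) (A : 'I_m -> 'M[R]_n) (y : 'I_m -> R) :
  'M[R]_n := C - \sum_(i < m) y i *: A i.

Definition pfeas (K : 'M[R]_n -> Prop) C A (y : 'I_m -> R) : Prop :=
  K (slack C A y).

Definition dfeas (K : 'M[R]_n -> Prop) (A : 'I_m -> 'M[R]_n) (b : 'I_m -> R)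
  (X : 'M[R]_n) : Prop := (forall i, dotm (A i) X = b i) /\ K X.

Definition popt K C A b (y : 'I_m -> R) : Prop :=
  pfeas K C A y /\ forall y', pfeas K C A y' -> bty b y' <= bty b y.

Definition dopt K (C : 'M[R]_n) A b (X : 'M[R]_n) : Prop :=
  dfeas K A b X /\ forall X', dfeas K A b X' -> dotm C X <= dotm C X'.

Definition attained_no_gap KP KD C A b : Prop :=
  exists y X, popt KP C A b y /\ dopt KD C A b X /\ bty b y = dotm C X.

End SDP.

(* Take no constraints and [C = 0]: then every feasible point of either pair is optimal with
   value 0, attained at 0.  In [S^2] with [S = e1 e1^T], the face [F = S^2_+ \cap S^perp] is
   [{diag(0, t) : t >= 0}], so [F^*] only constrains the (2,2) entry and contains
   [X = [[0, 1], [1, 0]]].  Since a positive semidefinite matrix with a zero diagonal entry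
   has a zero row, no [X + alpha S] (whose (2,2) entry is 0 and (2,1) entry is 1) is
   positive semidefinite. *)
From HB Require Import structures.
From mathcomp Require Import all_boot all_order all_algebra lra.
Set Implicit Arguments. Unset Strict Implicit. Unset Printing Implicit Defensive.
Import Order.TTheory GRing.Theory Num.Theory.
Local Open Scope ring_scope.

Section Cones.
Variables (R : rcfType) (n : nat).
Implicit Types (X Y S : 'M[R]_n) (i j : 'I_n).

Lemma quad_delta Y i j :
  delta_mx 0 i *m Y *m delta_mx j 0 = (Y i j)%:M :> 'M_1.
Proof. by apply/matrixP=> p q; rewrite !ord1 -rowE -colE !mxE. Qed.

Lemma dotm_delta i j Y : dotm (delta_mx i j) Y = Y j i.
Proof.
rewrite /dotm -(mul_delta_mx (0 : 'I_1)) -mulmxA mxtrace_mulC.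
by rewrite quad_delta mxtrace_scalar.
Qed.

Lemma dotmDl X1 X2 Y : dotm (X1 + X2) Y = dotm X1 Y + dotm X2 Y.
Proof. by rewrite /dotm mulmxDl mxtraceD. Qed.

Lemma dotm0l Y : dotm 0 Y = 0.
Proof. by rewrite /dotm mul0mx mxtrace0. Qed.

Lemma dotm0r X : dotm X 0 = 0.
Proof. by rewrite /dotm mulmx0 mxtrace0. Qed.

Lemma psd_quad_pair Y i j a c : psd Y ->
  0 <= a ^+ 2 * Y i i + a * c * (Y i j + Y j i) + c ^+ 2 * Y j j.
Proof.
move=> [_ /(_ (a *: delta_mx i 0 + c *: delta_mx j 0))].
rewrite [_^T]linearD /= ![(_ *: _)^T]linearZ /= !trmx_delta.
rewrite !mulmxDl !mulmxDr -!scalemxAl -!scalemxAr !quad_delta !mxE eqxx !mulr1n; lra.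
Qed.

Lemma psd_offdiag_eq0 Y i j : psd Y -> Y i i = 0 -> Y i j = 0.
Proof.
move=> psdY Yii0; have [symY _] := psdY.
have Yji : Y j i = Y i j by rewrite -{1}symY mxE.
(* the test vector (Y_jj + 1) e_i - 2 Y_ij e_j has quadratic form -4 Y_ij^2 *)
have := psd_quad_pair i j (Y j j + 1) (- (2 * Y i j)) psdY.
rewrite Yii0 Yji; nra.
Qed.

Lemma psd0 : psd (0 : 'M[R]_n).
Proof. by split=> [|x]; rewrite ?/symm ?trmx0 // mulmx0 mul0mx mxE. Qed.

Lemma psd_delta i : psd (delta_mx i i : 'M[R]_n).
Proof.
split=> [|x]; first by rewrite /symm trmx_delta.
rewrite -(mul_delta_mx (0 : 'I_1)) mulmxA -[x^T *m _]trmxK trmx_mul trmxK trmx_delta.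
by rewrite -mulmxA -rowE mxE big_ord1 mxE -expr2 sqr_ge0.
Qed.

Lemma faceF0 S : faceF S 0.
Proof. by split; [exact: psd0 | exact: dotm0r]. Qed.

Lemma dualF0 S : dualF S 0.
Proof. by split=> [|X _]; rewrite ?/symm ?trmx0 ?dotm0l. Qed.

Lemma dualF_delta_sum i j :
  dualF (delta_mx i i : 'M[R]_n) (delta_mx i j + delta_mx j i).
Proof.
split=> [|Y [psdY]]; first by rewrite /symm linearD /= !trmx_delta addrC.
rewrite dotm_delta => Yii0; have [symY _] := psdY.
have Yij0 := psd_offdiag_eq0 j psdY Yii0.
have Yji0 : Y j i = 0 by rewrite -symY mxE.
by rewrite dotmDl !dotm_delta Yij0 Yji0 addr0.
Qed.

Lemma not_psd_delta_sum_shift i j alpha : i != j ->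
  ~ psd (delta_mx i j + delta_mx j i + alpha *: delta_mx i i : 'M[R]_n).
Proof.
move=> neq_ij /(psd_offdiag_eq0 (i:=j) i); rewrite !mxE !eqxx eq_sym (negPf neq_ij) /=.
by rewrite mulr0 !addr0 add0r => /(_ erefl)/eqP; rewrite oner_eq0.
Qed.

End Cones.

Section NoConstraints.
Variables (R : rcfType) (n : nat).
Variables (A : 'I_0 -> 'M[R]_n) (b : 'I_0 -> R).

Lemma bty_nil (y : 'I_0 -> R) : bty b y = 0.
Proof. by rewrite /bty big_ord0. Qed.

Lemma slack_nil C (y : 'I_0 -> R) : slack C A y = C.
Proof. by rewrite /slack big_ord0 subr0. Qed.

Lemma dopt_nil KD X : KD X -> dopt KD 0 A b X.
Proof. by move=> KDX; split=> [|X' _]; [split=> [[]|] | rewrite !dotm0l]. Qed.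

Lemma attained_no_gap_nil (KP KD : 'M[R]_n -> Prop) :
  KP 0 -> KD 0 -> attained_no_gap KP KD 0 A b.
Proof.
move=> KP0 KD0; exists (fun _ => 0), 0; split; [|split].
- by split=> [|y' _]; rewrite /pfeas ?slack_nil // !bty_nil.
- exact: dopt_nil.
- by rewrite bty_nil dotm0l.
Qed.

End NoConstraints.

Theorem corollary4 (R : rcfType) :
  exists (n m : nat) (C : 'M[R]_n) (A : 'I_m -> 'M[R]_n) (b : 'I_m -> R)
         (S : 'M[R]_n),
    symm C /\ (forall i, symm (A i)) /\
    psd S /\ S != 0 /\ dotm C S = 0 /\ (forall i, dotm (A i) S = 0) /\
    attained_no_gap (@psd R n) (@psd R n) C A b /\
    attained_no_gap (faceF S) (dualF S) C A b /\
    exists X : 'M[R]_n,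
      dopt (dualF S) C A b X /\ ~ (exists alpha : R, psd (X + alpha *: S)).
Proof.
pose S : 'M[R]_2 := delta_mx ord0 ord0.
exists 2%N, 0%N, 0, (fun _ => 0), (fun _ => 0), S.
have symm0 : symm (0 : 'M[R]_2) by rewrite /symm trmx0.
do 2!split=> //; split; first exact: psd_delta.
split; first by apply/eqP=> /matrixP/(_ ord0 ord0)/eqP; rewrite !mxE oner_eq0.
split; first exact: dotm0l.
split=> [[]//|]; split; first exact/attained_no_gap_nil/psd0/psd0.
split; first exact/attained_no_gap_nil/dualF0/faceF0.
exists (delta_mx ord0 ord_max + delta_mx ord_max ord0).
by split=> [|[alpha]]; [exact/dopt_nil/dualF_delta_sum | exact: not_psd_delta_sum_shift].
Qed.
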